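(* The $3\times2\times3$ quaternion tensor $$T=\left(\begin{bmatrix}1&0&0\\0&1&0\\0&0&1\end{bmatrix};\begin{bmatrix}0&0&1\\0&1&0\\0&0&0\end{bmatrix}\right)$$ has $\mathrm{rank}(T)=4$.
   Context: $\mathbb{H}$ denotes the real quaternions. An $n_1\times n_2\times n_3$ quaternion tensor is an array $T=(T_{ijk})$ with entries in $\mathbb{H}$, $1\le i\le n_1$, $1\le j\le n_2$, $1\le k\le n_3$; it is written $T=(A_1;\dots;A_{n_2})$ where the frontal slice $A_j$ is the $n_1\times n_3$ matrix $(T_{ijk})_{i,k}$. A nonzero tensor is simple if $T_{ijk}=a_ib_jc_k$ (quaternion product in this order) for some $\vec a\in\mathbb{H}^{n_1},\vec b\in\mathbb{H}^{n_2},\vec c\in\mathbb{H}^{n_3}$. The rank of $T$ is the least number of simple tensors summing to $T$. *)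

From Stdlib Require Import Reals.
From mathcomp Require Import all_boot.
Set Implicit Arguments. Unset Strict Implicit. Unset Printing Implicit Defensive.

Record quat : Type := Quat { qre : R; qi : R; qj : R; qk : R }.

Definition qzero : quat := Quat R0 R0 R0 R0.
Definition qone  : quat := Quat R1 R0 R0 R0.

Definition qadd (p q : quat) : quat :=
  Quat (Rplus (qre p) (qre q)) (Rplus (qi p) (qi q))
       (Rplus (qj p) (qj q)) (Rplus (qk p) (qk q)).

(* Hamilton product: i^2 = j^2 = k^2 = ijk = -1. *)
Definition qmul (p q : quat) : quat :=
  let a1 := qre p in let b1 := qi p in let c1 := qj p in let d1 := qk p in
  let a2 := qre q in let b2 := qi q in let c2 := qj q in let d2 := qk q in
  Quat (Rminus (Rminus (Rminus (Rmult a1 a2) (Rmult b1 b2)) (Rmult c1 c2)) (Rmult d1 d2))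
       (Rminus (Rplus (Rplus (Rmult a1 b2) (Rmult b1 a2)) (Rmult c1 d2)) (Rmult d1 c2))
       (Rplus (Rplus (Rminus (Rmult a1 c2) (Rmult b1 d2)) (Rmult c1 a2)) (Rmult d1 b2))
       (Rplus (Rminus (Rplus (Rmult a1 d2) (Rmult b1 c2)) (Rmult c1 b2)) (Rmult d1 a2)).

Definition qtensor (n1 n2 n3 : nat) := 'I_n1 -> 'I_n2 -> 'I_n3 -> quat.

Definition simple_tensor n1 n2 n3 (T : qtensor n1 n2 n3) : Prop :=
  (exists i j k, T i j k <> qzero) /\
  exists (a : 'I_n1 -> quat) (b : 'I_n2 -> quat) (c : 'I_n3 -> quat),
    forall i j k, T i j k = qmul (qmul (a i) (b j)) (c k).

Definition sum_of_simple n1 n2 n3 (T : qtensor n1 n2 n3) (r : nat) : Prop :=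
  exists S : 'I_r -> qtensor n1 n2 n3,
    (forall l, simple_tensor (S l)) /\
    forall i j k, T i j k = \big[qadd/qzero]_(l < r) S l i j k.

Definition has_rank n1 n2 n3 (T : qtensor n1 n2 n3) (r : nat) : Prop :=
  sum_of_simple T r /\ forall r', (r' < r)%N -> ~ sum_of_simple T r'.

Definition qofb (b : bool) : quat := if b then qone else qzero.

(* The 3x2x3 tensor (A_1; A_2) with A_1 = I_3 and
   A_2 = [[0,0,1],[0,1,0],[0,0,0]]; frontal slice A_j has entries (i,k). *)
Definition T14 : qtensor 3 2 3 := fun i j k =>
  if (nat_of_ord j == 0)%N then qofb (nat_of_ord i == nat_of_ord k)
  else qofb (((nat_of_ord i == 0) && (nat_of_ord k == 2))
             || ((nat_of_ord i == 1) && (nat_of_ord k == 1)))%N.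

From HB Require Import structures.
From Stdlib Require Import Reals Lra Psatz.
From mathcomp Require Import all_boot all_algebra Rstruct.
Set Implicit Arguments. Unset Strict Implicit. Unset Printing Implicit Defensive.
Import GRing.Theory.

(* Upper bound: T14 is written explicitly as a sum of four outer products
   a (x) b (x) c with nonzero factors.

   Lower bound: a decomposition into r < 4 simple tensors can be padded with
   zero terms into three products T_ijk = sum_l a_l(i) b_l(j) c_l(k).  Writing
   X = (a_l(i))_il, C = (c_l(k))_lk and D_j = diag(b_l(j)), the two frontal
   slices read I = X D_0 C and N = X D_1 C.  Over the quaternions a one-sided
   inverse of a square matrix is two-sided (via the faithful real 4x4
   representation and the commutative result over R), so (D_0 C) X = I; as
   H has no zero divisors, C X is then diagonal, and N X = X E for a diagonal
   E.  Rows 1 and 3 of this identity force the last row of X to vanish,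
   contradicting X (D_0 C) = I. *)

Local Open Scope ring_scope.

Lemma quat_ext p q :
  qre p = qre q -> qi p = qi q -> qj p = qj q -> qk p = qk q -> p = q.
Proof. by case: p q => ? ? ? ? [? ? ? ?] /= -> -> -> ->. Qed.

Ltac quat_ring := apply: quat_ext; rewrite /= ?/qmul ?/qadd /=; ring.

Definition qopp (q : quat) : quat :=
  Quat (Ropp (qre q)) (Ropp (qi q)) (Ropp (qj q)) (Ropp (qk q)).

Definition quat_coords (q : quat) : R * R * R * R := (qre q, qi q, qj q, qk q).
Definition coords_quat (x : R * R * R * R) : quat :=
  let: (a, b, c, d) := x in Quat a b c d.
Lemma quat_coordsK : cancel quat_coords coords_quat. Proof. by case. Qed.

HB.instance Definition _ := Choice.copy quat (can_type quat_coordsK).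

Lemma qaddA : associative qadd. Proof. move=> ? ? ?; quat_ring. Qed.
Lemma qaddC : commutative qadd. Proof. move=> ? ?; quat_ring. Qed.
Lemma qadd0 : left_id qzero qadd. Proof. move=> ?; quat_ring. Qed.
Lemma qaddN : left_inverse qzero qopp qadd. Proof. move=> ?; quat_ring. Qed.
HB.instance Definition _ := GRing.isZmodule.Build quat qaddA qaddC qadd0 qaddN.

Lemma qmulA : associative qmul. Proof. move=> ? ? ?; quat_ring. Qed.
Lemma qmul1 : left_id qone qmul. Proof. move=> ?; quat_ring. Qed.
Lemma qmulr1 : right_id qone qmul. Proof. move=> ?; quat_ring. Qed.
Lemma qmulDl : left_distributive qmul qadd. Proof. move=> ? ? ?; quat_ring. Qed.
Lemma qmulDr : right_distributive qmul qadd. Proof. move=> ? ? ?; quat_ring. Qed.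
Lemma qone_neq0 : qone != qzero.
Proof. by apply/eqP => /(congr1 qre) /=; lra. Qed.
HB.instance Definition _ := GRing.Zmodule_isNzRing.Build quat
  qmulA qmul1 qmulr1 qmulDl qmulDr qone_neq0.

Lemma qsumE r (F : 'I_r -> quat) :
  \big[qadd/qzero]_(l < r) F l = \sum_(l < r) F l.
Proof. by []. Qed.

(* H has no zero divisors: the squared norm is multiplicative and definite. *)

Definition qnorm2 (q : quat) : R :=
  Rplus (Rplus (Rplus (Rmult (qre q) (qre q)) (Rmult (qi q) (qi q)))
               (Rmult (qj q) (qj q))) (Rmult (qk q) (qk q)).

Lemma qnorm2M (p q : quat) : qnorm2 (p * q) = Rmult (qnorm2 p) (qnorm2 q).
Proof. rewrite /qnorm2 /= /qmul /=; ring. Qed.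

Lemma qnorm2_eq0 q : qnorm2 q = R0 -> q = 0.
Proof. by rewrite /qnorm2 => q0; apply: quat_ext => /=; nra. Qed.

Lemma qmul_eq0 (p q : quat) : p * q = 0 -> p = 0 \/ q = 0.
Proof.
move=> pq0; have : qnorm2 (p * q) = R0 by rewrite pq0 /qnorm2 /=; ring.
by rewrite qnorm2M => /Rmult_integral [] /qnorm2_eq0; [left | right].
Qed.

(* The left regular representation q |-> (x |-> q x) of H on R^4: column t
   of qmx q holds the coordinates of q times the t-th basis vector. *)

Definition qcoord (q : quat) (s : 'I_4) : R :=
  match val s with 0 => qre q | 1 => qi q | 2 => qj q | _ => qk q end.

Definition qbasis (t : 'I_4) : quat :=
  match val t with
  | 0 => Quat R1 R0 R0 R0 | 1 => Quat R0 R1 R0 R0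
  | 2 => Quat R0 R0 R1 R0 | _ => Quat R0 R0 R0 R1 end.

Definition qmx (q : quat) : 'M[R]_4 := \matrix_(s, t) qcoord (q * qbasis t) s.

Lemma qmxM (p q : quat) : qmx (p * q) = qmx p *m qmx q.
Proof.
apply/matrixP => s t; rewrite !mxE !big_ord_recr big_ord0 /= !mxE.
case: s t => [[|[|[|[|s]]]] ?] [[|[|[|[|t]]]] ?] //=;
  by rewrite add0r /qcoord /= -!RplusE -!RmultE /=; ring.
Qed.

Lemma qcoordD (p q : quat) s : qcoord (p + q) s = qcoord p s + qcoord q s.
Proof. by case: s => [[|[|[|[|s]]]] ?]. Qed.

Lemma qcoord0 s : qcoord 0 s = 0.
Proof. by case: s => [[|[|[|[|s]]]] ?]. Qed.

Lemma qmxD (p q : quat) : qmx (p + q) = qmx p + qmx q.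
Proof. by apply/matrixP => s t; rewrite !mxE mulrDl qcoordD. Qed.

Lemma qmx0 : qmx 0 = 0.
Proof. by apply/matrixP => s t; rewrite !mxE mul0r qcoord0. Qed.

Lemma qmx1 : qmx 1 = 1%:M.
Proof.
apply/matrixP => s t; rewrite !mxE mul1r.
by case: s t => [[|[|[|[|s]]]] ?] [[|[|[|[|t]]]] ?].
Qed.

(* The representation is faithful: column 0 of qmx q holds q itself. *)
Lemma qmx_inj : injective qmx.
Proof.
have col0 q s : qmx q s 0 = qcoord q s by rewrite mxE mulr1.
move=> p q /matrixP pq; have e s : qcoord p s = qcoord q s by rewrite -!col0 pq.
by apply: quat_ext; [apply: (e 0) | apply: (e 1) | apply: (e 2) | apply: (e 3)].
Qed.

Definition qrep n (M : 'M[quat]_n) : 'M[R]_(\sum_(i < n) 4) :=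
  \mxblock_(i, j) qmx (M i j).

Lemma qrepM n (M N : 'M[quat]_n) : qrep (M *m N) = qrep M *m qrep N.
Proof.
rewrite /qrep mul_mxblock; apply: eq_mxblock => i k.
rewrite mxE (big_morph qmx qmxD qmx0).
by apply: eq_bigr => j _; rewrite qmxM.
Qed.

Lemma qrep1 n : qrep (1%:M : 'M[quat]_n) = 1%:M.
Proof.
rewrite -(mxdiagZ (p_ := fun=> 4%N) 1) /qrep /mxdiag; apply: eq_mxblock => i j.
by rewrite mxE conform_mx_id; case: eqP => _; rewrite ?qmx1 ?qmx0.
Qed.

Lemma qrep_inj n : injective (@qrep n).
Proof.
move=> M N /(eq_mxblockP (fun i j => qmx (M i j)) (fun i j => qmx (N i j))) eqMN.
by apply/matrixP => i j; apply: qmx_inj.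
Qed.

(* A right inverse of a square quaternion matrix is a left inverse, as it is
   over the commutative field R. *)
Lemma quat_mx_inv n (X W : 'M[quat]_n) : X *m W = 1%:M -> W *m X = 1%:M.
Proof.
move=> XW; apply: qrep_inj; rewrite qrepM qrep1.
by apply: mulmx1C; rewrite -qrepM XW qrep1.
Qed.

Lemma diag_inverse_offdiag n (d : 'rV[quat]_n) (P : 'M[quat]_n) :
  diag_mx d *m P = 1%:M -> forall l m, l != m -> P l m = 0.
Proof.
move=> dP l m lm.
have := congr1 (fun A : 'M_n => A l l) dP.
have := congr1 (fun A : 'M_n => A l m) dP.
rewrite !mul_diag_mx !mxE eqxx (negbTE lm) /= => /qmul_eq0 [d0|//].
by rewrite d0 mul0r => /eqP; rewrite eq_sym oner_eq0.
Qed.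

(* T is a sum of r products a_l(i) b_l(j) c_l(k), zero factors allowed;
   unlike sum_of_simple, this notion is monotone in r. *)
Definition sum_of_products n1 n2 n3 (T : qtensor n1 n2 n3) (r : nat) : Prop :=
  exists (a : 'I_r -> 'I_n1 -> quat) (b : 'I_r -> 'I_n2 -> quat)
         (c : 'I_r -> 'I_n3 -> quat),
    forall i j k, T i j k = \sum_(l < r) a l i * b l j * c l k.

Lemma sum_of_simple_products n1 n2 n3 (T : qtensor n1 n2 n3) r :
  sum_of_simple T r -> sum_of_products T r.
Proof.
move=> [S [S_simple TS]].
have S_factors l :
    exists abc : ('I_n1 -> quat) * ('I_n2 -> quat) * ('I_n3 -> quat),
    forall i j k, S l i j k = abc.1.1 i * abc.1.2 j * abc.2 k.
  by have [_ [a [b [c Sl]]]] := S_simple l; exists (a, b, c).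
have [abc Sabc] := fin_all_exists S_factors.
exists (fun l => (abc l).1.1), (fun l => (abc l).1.2), (fun l => (abc l).2).
by move=> i j k; rewrite TS; apply: eq_bigr => l _; rewrite Sabc.
Qed.

Definition pad_factor r s m (f : 'I_r -> 'I_m -> quat) (l : 'I_s) : 'I_m -> quat :=
  if insub (val l) is Some l' then f l' else fun=> 0.

Lemma sum_of_products_widen n1 n2 n3 (T : qtensor n1 n2 n3) r s :
  (r <= s)%N -> sum_of_products T r -> sum_of_products T s.
Proof.
move=> rs [a [b [c Tabc]]].
exists (pad_factor (s := s) a), (pad_factor (s := s) b), (pad_factor (s := s) c).
move=> i j k.
pose F n := if insub n is Some l then a l i * b l j * c l k else 0 : quat.
rewrite Tabc (eq_bigr (F \o val)) => [|l _]; last by rewrite /= /F valK.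
rewrite (big_ord_widen s F rs) big_mkcond; apply: eq_bigr => l _.
by rewrite /F /pad_factor; case: insubP => [l' -> _ //|/negbTE ->]; rewrite !mul0r.
Qed.

Lemma slice_factor n1 n2 n3 r (a : 'I_r -> 'I_n1 -> quat)
    (b : 'I_r -> 'I_n2 -> quat) (c : 'I_r -> 'I_n3 -> quat) j :
  \matrix_(i, k) (\sum_(l < r) a l i * b l j * c l k) =
  (\matrix_(i, l) a l i) *m diag_mx (\row_l b l j) *m (\matrix_(l, k) c l k).
Proof.
apply/matrixP => i k; rewrite mul_mx_diag !mxE.
by apply: eq_bigr => l _; rewrite !mxE.
Qed.

Lemma T14_not_sum_of_3_products : ~ sum_of_products T14 3.
Proof.
move=> [a [b [c Tabc]]].
pose X := \matrix_(i, l) a l i; pose C := \matrix_(l, k) c l k.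
pose D j := diag_mx (\row_l b l j).
have slice j : \matrix_(i, k) T14 i j k = X *m D j *m C.
  by rewrite -slice_factor; apply/matrixP => i k; rewrite !mxE Tabc.
have XW : X *m (D 0 *m C) = 1%:M.
  rewrite mulmxA -slice.
  by apply/matrixP => -[[|[|[|i]]] ?] [[|[|[|k]]] ?]; rewrite !mxE.
have CX_offdiag : forall l m, l != m -> (C *m X) l m = 0.
  apply: (diag_inverse_offdiag (d := \row_l b l 0)).
  by rewrite mulmxA quat_mx_inv.
pose e := \row_m (b m 1 * (C *m X) m m).
have NX : (\matrix_(i, k) T14 i 1 k) *m X = X *m diag_mx e.
  rewrite slice -!mulmxA; congr (X *m _).
  apply/matrixP => l m; rewrite mul_diag_mx !mxE.
  case: eqVneq => [->|lm]; first by rewrite mulr1n.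
  by have := CX_offdiag _ _ lm; rewrite mxE => ->; rewrite mulr0 mulr0n.
clearbody e X.
(* Rows 1 and 3 of N X = X E: X_3m = X_1m e_m and 0 = X_3m e_m. *)
have X_last_row m : X ord_max m = 0.
  have := congr1 (fun A : 'M_3 => A ord0 m) NX.
  have := congr1 (fun A : 'M_3 => A ord_max m) NX.
  rewrite !mul_mx_diag !mxE !big_ord_recr !big_ord0 /= !mxE /T14 /=.
  rewrite !mul0r !mul1r !add0r.
  by move=> /esym/qmul_eq0 [//|e0] ->; rewrite e0 mulr0.
have := congr1 (fun A : 'M_3 => A ord_max ord_max) XW.
rewrite mxE big1 => [|l _]; last by rewrite X_last_row mul0r.
by rewrite mxE eqxx => /eqP; rewrite eq_sym oner_eq0.
Qed.

Definition outer n1 n2 n3 (a : 'I_n1 -> quat) (b : 'I_n2 -> quat)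
    (c : 'I_n3 -> quat) : qtensor n1 n2 n3 :=
  fun i j k => a i * b j * c k.

Lemma outer_simple n1 n2 n3 (a : 'I_n1 -> quat) (b : 'I_n2 -> quat)
    (c : 'I_n3 -> quat) i0 j0 k0 :
  a i0 != 0 -> b j0 != 0 -> c k0 != 0 -> simple_tensor (outer a b c).
Proof.
move=> a0 b0 c0; split; last by exists a, b, c.
exists i0, j0, k0; rewrite /outer.
by case/qmul_eq0 => [/qmul_eq0 [] |] /eqP; apply/negP.
Qed.

Definition qdelta n (p : nat) (x : 'I_n) : quat := qofb (val x == p).

Definition T14_terms (l : 'I_4) : qtensor 3 2 3 :=
  match val l with
  | 0 => outer (qdelta 1) (fun=> 1) (qdelta 1)
  | 1 => outer (qdelta 0) (qdelta 1) (fun k => qdelta 0 k + qdelta 2 k)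
  | 2 => outer (qdelta 0) (fun j => qdelta 0 j - qdelta 1 j) (qdelta 0)
  | _ => outer (qdelta 2) (qdelta 0) (qdelta 2)
  end.

Lemma T14_terms_simple l : simple_tensor (T14_terms l).
Proof.
pose i1 : 'I_3 := Ordinal (isT : (1 < 3)%N).
case: l => [[|[|[|[|l]]]] ?] //; rewrite /T14_terms /=.
- apply: (outer_simple (i0 := i1) (j0 := ord0) (k0 := i1));
    by rewrite /qdelta /= oner_neq0.
- apply: (outer_simple (i0 := ord0) (j0 := ord_max) (k0 := ord0));
    by rewrite /qdelta /= ?addr0 oner_neq0.
- apply: (outer_simple (i0 := ord0) (j0 := ord0) (k0 := ord0));
    by rewrite /qdelta /= ?subr0 oner_neq0.
- apply: (outer_simple (i0 := ord_max) (j0 := ord0) (k0 := ord_max));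
    by rewrite /qdelta /= oner_neq0.
Qed.

Lemma T14_sum_of_terms i j k :
  T14 i j k = \big[qadd/qzero]_(l < 4) T14_terms l i j k.
Proof.
rewrite qsumE.
case: i j k => [[|[|[|i]]] ?] [[|[|j]] ?] [[|[|[|k]]] ?] //;
  rewrite !big_ord_recr big_ord0 /= /T14_terms /outer /qdelta /T14 /=; quat_ring.
Qed.

Local Close Scope ring_scope.

Theorem mainTheorem14 : has_rank T14 4.
Proof.
split.
- by exists T14_terms; split; [exact: T14_terms_simple | exact: T14_sum_of_terms].
- move=> r r_lt4 /sum_of_simple_products /(sum_of_products_widen (s := 3)).
  by move=> /(_ r_lt4); exact: T14_not_sum_of_3_products.
Qed.
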